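(* Let $M=\{a^i: i\geq 0\}\cup\{b_j: j\in\mathbb{Z}\}\cup\{0\}$ be the monoid with zero $0$ and identity $a^0=1$, where $a^ia^k=a^{i+k}$, and for $i\geq1$, $j,k\in\mathbb{Z}$: $a^ib_j=b_{i+j}$, $b_ja^i=0$, $b_jb_k=0$. Then $M$ is residually finite, $b_0$ and $b_1$ are not $\mathcal{L}$-related in $M$, but for every finite monoid $T$ and every homomorphism $\theta:M\to T$ the elements $\theta(b_0)$ and $\theta(b_1)$ are $\mathcal{L}$-related in $T$.
   Context: A monoid is residually finite if any two distinct elements are separated by a homomorphism to a finite monoid. Green's relation $\mathcal{L}$ on a monoid $T$: $x\mathcal{L}y$ iff $Tx=Ty$. *)

From Stdlib Require Import ZArith.
From mathcomp Require Import all_boot.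

Set Implicit Arguments.
Unset Strict Implicit.
Unset Printing Implicit Defensive.

Inductive Melt : Type :=
  | Apow : nat -> Melt
  | Bel : Z -> Melt
  | Mzero : Melt.

Definition Mmul (x y : Melt) : Melt :=
  match x, y with
  | Mzero, _ => Mzero
  | _, Mzero => Mzero
  | Apow i, Apow k => Apow (i + k)%nat
  | Apow i, Bel j => Bel (Z.of_nat i + j)%Z
  | Bel j, Apow 0 => Bel j
  | Bel _, Apow (S _) => Mzero
  | Bel _, Bel _ => Mzero
  end.

Definition Mone : Melt := Apow 0.

Record finMonoid := FinMonoid {
  fm_car :> finType;
  fm_mul : fm_car -> fm_car -> fm_car;
  fm_one : fm_car;
  fm_mulA : forall x y z, fm_mul x (fm_mul y z) = fm_mul (fm_mul x y) z;
  fm_mul1x : forall x, fm_mul fm_one x = x;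
  fm_mulx1 : forall x, fm_mul x fm_one = x
}.

Definition is_hom (T : finMonoid) (f : Melt -> T) : Prop :=
  f Mone = @fm_one T /\ forall x y, f (Mmul x y) = @fm_mul T (f x) (f y).

Definition Lrel (S : Type) (mul : S -> S -> S) (x y : S) : Prop :=
  forall z, (exists s, z = mul s x) <-> (exists t, z = mul t y).

Definition M_residually_finite : Prop :=
  forall x y : Melt, x <> y ->
    exists (T : finMonoid) (f : Melt -> T), is_hom f /\ f x <> f y.

(* M acts on the finite set of states of a counter for the powers of a that
   saturates at n, together with a counter modulo n + 1 for the indices of the
   b_j; this action is a homomorphism into a finite transformation monoid that
   separates all elements of size below n.  In a finite image the powers of a
   eventually repeat, theta(a^n) = theta(a^(n+d+1)), so
   theta(b_0) = theta(a^n) theta(b_(-n)) = theta(a^(n+d+1) b_(-n))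
   = theta(a^d) theta(b_1), while theta(b_1) = theta(a) theta(b_0).  In M
   itself b_0 is no left multiple of b_1 because left multiplication can only
   raise the index. *)
From Stdlib Require Import ZArith Lia.
From mathcomp Require Import all_boot.

Set Implicit Arguments.
Unset Strict Implicit.
Unset Printing Implicit Defensive.

Section GreenL.

Variables (S : Type) (mul : S -> S -> S).

Lemma Lrel_of_factors (mulA : forall x y z, mul x (mul y z) = mul (mul x y) z)
    (x y u v : S) :
  x = mul u y -> y = mul v x -> Lrel mul x y.
Proof.
move=> xE yE z; split=> [[s ->] | [t ->]].
- by exists (mul s u); rewrite xE mulA.
- by exists (mul t v); rewrite yE mulA.
Qed.

Lemma Lrel_factor (one : S) (mul1x : forall x, mul one x = x) (x y : S) :
  Lrel mul x y -> exists t, x = mul t y.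
Proof. by move=> xLy; apply/xLy; exists one; rewrite mul1x. Qed.

End GreenL.

Lemma fin_seq_repeats (T : finType) (g : nat -> T) :
  exists n d, g n = g (n + d.+1).
Proof.
have : ~~ injectiveb (fun i : 'I_#|T|.+1 => g i).
  by apply/negP => /injectiveP /leq_card; rewrite card_ord ltnn.
case/injectivePn=> i [j neq_ij gij].
wlog lt_ij : i j neq_ij gij / i < j.
  move=> wlog_ij; case: (ltngtP i j) => [lt_ij | lt_ji | /val_inj eq_ij].
  - exact: wlog_ij lt_ij.
  - by apply: (wlog_ij j i); rewrite 1?eq_sym.
  - by rewrite eq_ij eqxx in neq_ij.
by exists i, (j - i.+1); rewrite addnS -addSn subnKC.
Qed.

Lemma Mmul_Bel1_neq_Bel0 (t : Melt) : Mmul t (Bel 1%Z) <> Bel 0%Z.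
Proof. by case: t => [i|j|] //= []; lia. Qed.

Lemma not_Lrel_Bel0_Bel1 : ~ Lrel Mmul (Bel 0%Z) (Bel 1%Z).
Proof.
have Mmul1x (x : Melt) : Mmul Mone x = x by case: x.
by case/(Lrel_factor Mmul1x) => t /esym /Mmul_Bel1_neq_Bel0.
Qed.

Lemma hom_Lrel_Bel0_Bel1 (T : finMonoid) (f : Melt -> T) :
  is_hom f -> Lrel (@fm_mul T) (f (Bel 0%Z)) (f (Bel 1%Z)).
Proof.
move=> [_ fM].
have [n [d per]] := fin_seq_repeats (fun i => f (Apow i)).
apply: (Lrel_of_factors (@fm_mulA T) (u := f (Apow d)) (v := f (Apow 1))).
- have -> : Bel 0%Z = Mmul (Apow n) (Bel (- Z.of_nat n)) by congr Bel; lia.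
  rewrite fM /= per -!fM /=; congr (f (Bel _)); rewrite -plusE; lia.
- by rewrite -fM.
Qed.

Section FunMonoid.

Variable X : finType.

Definition ffcomp (F G : {ffun X -> X}) : {ffun X -> X} := [ffun v => F (G v)].

Lemma ffcompA (F G H : {ffun X -> X}) :
  ffcomp F (ffcomp G H) = ffcomp (ffcomp F G) H.
Proof. by apply/ffunP => v; rewrite !ffunE. Qed.

Lemma ffcomp1f (F : {ffun X -> X}) : ffcomp [ffun v => v] F = F.
Proof. by apply/ffunP => v; rewrite !ffunE. Qed.

Lemma ffcompf1 (F : {ffun X -> X}) : ffcomp F [ffun v => v] = F.
Proof. by apply/ffunP => v; rewrite !ffunE. Qed.

Definition fun_monoid : finMonoid :=
  @FinMonoid {ffun X -> X} ffcomp [ffun v => v] ffcompA ffcomp1f ffcompf1.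

End FunMonoid.

Lemma Z_mod_inj_small (K j k : Z) : (0 < K)%Z -> (Z.abs j + Z.abs k < K)%Z ->
  (j mod K = k mod K)%Z -> j = k.
Proof.
move=> K_gt0 small eq_mod.
have ej := Z.div_mod j K ltac:(lia).
have ek := Z.div_mod k K ltac:(lia).
rewrite eq_mod in ej.
have diffE : (K * (j / K - k / K) = j - k)%Z by lia.
have : (j / K - k / K = 0)%Z by nia.
lia.
Qed.

Definition msize (m : Melt) : nat :=
  match m with Apow i => i | Bel j => Z.to_nat (Z.abs j) | Mzero => 0 end.

Section TruncatedAction.

Variable n : nat.
Hypothesis n_gt0 : 0 < n.

Definition trunc (k : nat) : 'I_n.+1 := inord (minn k n).

Definition zmod (z : Z) : 'I_n.+1 := inord (Z.to_nat (z mod Z.of_nat n.+1)).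

Lemma trunc_val (k : nat) : trunc k = minn k n :> nat.
Proof. by rewrite inordK // ltnS geq_minr. Qed.

Lemma zmod_val (z : Z) : Z.of_nat (zmod z) = (z mod Z.of_nat n.+1)%Z.
Proof.
have [ge0 lt] : (0 <= z mod Z.of_nat n.+1 < Z.of_nat n.+1)%Z.
  by apply: Z.mod_pos_bound; lia.
by rewrite inordK; [lia | apply/ltP; lia].
Qed.

Lemma trunc_ord (k : 'I_n.+1) : trunc k = k.
Proof. by apply: val_inj => /=; rewrite trunc_val; apply/minn_idPl; rewrite -ltnS. Qed.

Lemma zmod_ord (r : 'I_n.+1) : zmod (Z.of_nat r) = r.
Proof.
apply: val_inj; apply: Nat2Z.inj; rewrite zmod_val Z.mod_small //.
by have /ltP := ltn_ord r; lia.
Qed.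

Lemma trunc_addr (i k : nat) : trunc (i + trunc k) = trunc (i + k).
Proof.
apply: val_inj => /=; rewrite !trunc_val; case: (leqP k n) => // lt_nk.
rewrite !(minn_idPr _) ?leq_addl //.
exact: leq_trans (ltnW lt_nk) (leq_addl _ _).
Qed.

Lemma trunc_eq0 (k : nat) : (trunc k == 0 :> nat) = (k == 0).
Proof. by rewrite trunc_val; case: k => [|k]; rewrite ?min0n // eqn0Ngt leq_min n_gt0. Qed.

Lemma zmod_addr (i : nat) (z : Z) :
  zmod (Z.of_nat i + Z.of_nat (zmod z)) = zmod (Z.of_nat i + z).
Proof. by rewrite {1}/zmod zmod_val Zplus_mod_idemp_r. Qed.

(* [Some (true, k)] is position k on the truncated a-chain, [Some (false, r)]
   is residue r of the b-indices, and [None] is the sink representing 0. *)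
Definition state : finType := option (bool * 'I_n.+1).

Definition start : state := Some (true, ord0).

Definition act (m : Melt) (v : state) : state :=
  match m, v with
  | Mzero, _ | _, None => None
  | Apow i, Some (true, k) => Some (true, trunc (i + k))
  | Apow i, Some (false, r) => Some (false, zmod (Z.of_nat i + Z.of_nat r))
  | Bel j, Some (true, k) => if k == 0 :> nat then Some (false, zmod j) else None
  | Bel _, Some (false, _) => None
  end.

Lemma act_one (v : state) : act Mone v = v.
Proof. by case: v => [[[] k]|] //=; rewrite ?trunc_ord ?zmod_ord. Qed.

Lemma act_mul (x y : Melt) (v : state) : act (Mmul x y) v = act x (act y v).
Proof.
case: x => [i|j|]; case: y => [k|l|] //; case: v => [[[] m]|] //=.
- by rewrite trunc_addr addnA.
- by rewrite zmod_addr -plusE Nat2Z.inj_add Z.add_assoc.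
- by case: ifP; rewrite // zmod_addr.
- by case: k => [|k] /=; rewrite ?add0n ?trunc_ord // trunc_eq0.
- by case: k => [|k] //=; rewrite zmod_ord.
- by case: k.
- by case: ifP.
Qed.

Definition rep (m : Melt) : fun_monoid state := [ffun v => act m v].

Lemma rep_hom : is_hom rep.
Proof.
by split=> [|x y]; apply/ffunP => v; rewrite !ffunE ?act_one ?act_mul.
Qed.

Lemma act_start_inj (x y : Melt) : msize x + msize y < n ->
  act x start = act y start -> x = y.
Proof.
case: x => [i|j|]; case: y => [k|l|] //= small.
- have le_in : i <= n by apply: leq_trans (ltnW small); apply: leq_addr.
  have le_kn : k <= n by apply: leq_trans (ltnW small); apply: leq_addl.
  case=> /(congr1 val) /=; rewrite !trunc_val !addn0.
  by rewrite (minn_idPl le_in) (minn_idPl le_kn) => ->.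
- case=> /(congr1 (fun r : 'I_n.+1 => Z.of_nat r)); rewrite !zmod_val.
  move=> eq_mod; congr Bel; apply: (Z_mod_inj_small _ _ eq_mod); first lia.
  by move/ltP: small; rewrite -plusE; lia.
Qed.

End TruncatedAction.

Lemma M_is_residually_finite : M_residually_finite.
Proof.
move=> x y neq_xy.
pose n := (msize x + msize y).+1.
exists (fun_monoid (state n)), (rep n); split; first exact: rep_hom.
move=> /(congr1 (fun F : {ffun state n -> state n} => F (start n))).
rewrite !ffunE.
by move/(act_start_inj (ltnSn _)).
Qed.

Theorem mainTheorem3 :
  M_residually_finite /\
  ~ Lrel Mmul (Bel 0%Z) (Bel 1%Z) /\
  (forall (T : finMonoid) (f : Melt -> T), is_hom f ->
     Lrel (@fm_mul T) (f (Bel 0%Z)) (f (Bel 1%Z))).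
Proof.
split; first exact: M_is_residually_finite.
split; first exact: not_Lrel_Bel0_Bel1.
exact: hom_Lrel_Bel0_Bel1.
Qed.
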